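(* Let $\varphi(x)$, $x\in\mathbb{C}^n$, be given in disjunctive normal form $$\varphi(x)=\bigvee_{i=1}^{d}\Big(\bigwedge_{j=1}^{e_i} t_{ij}(x)=0\;\wedge\;\bigwedge_{k=1}^{f_i} u_{ik}(x)\neq 0\Big),$$ with $t_{ij},u_{ik}\in\mathbb{C}[x_1,\dots,x_n]$, having $d$ disjuncts and a total of $e=\sum_i e_i$ equations. Then there is a polynomial $p(a,b,x)\in\mathbb{C}[a,b,x]$ of degree at most $d$ in $a$ and at most $e$ in $b$ such that for all $x\in\mathbb{C}^n$, $$\varphi(x)\iff(\exists a\in\mathbb{C})(\forall b\in\mathbb{C})\;p(a,b,x)=0.$$ Explicitly, one may take $p(a,b,x)=\prod_{i=1}^d\Big[\big(1-a\prod_{k=1}^{f_i}u_{ik}(x)\big)+\sum_{j=1}^{e_i}t_{ij}(x)\,b^j\Big]$.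
   Context: Empty products are $1$ and empty sums are $0$; $a,b$ are single scalar variables. *)

From HB Require Import structures.
From mathcomp Require Import all_boot all_order all_algebra.
From mathcomp Require Import Rstruct complex.
From mathcomp Require Import mpoly.
Set Implicit Arguments. Unset Strict Implicit. Unset Printing Implicit Defensive.
Import Order.TTheory GRing.Theory Num.Theory.
Local Open Scope ring_scope.

Definition C : Type := complex Rdefinitions.R.
Definition C_closedField : closedFieldType := C.

Definition mdegin (K : nzRingType) (m : nat) (p : {mpoly K[m]}) (i : 'I_m) : nat :=
  \max_(mm <- msupp p) mm i.

(* The evaluation point (a, b, x) in C^(2+n): coordinate 0 is a,
   coordinate 1 is b, coordinates 2..n+1 are x_1..x_n. *)
Definition pt_abx (n : nat) (a b : C) (x : 'I_n -> C) : 'I_(2 + n) -> C :=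
  fun i => match split i with
           | inl k => if k == ord0 then a else b
           | inr j => x j
           end.

Definition idx_a (n : nat) : 'I_(2 + n) := lshift n (ord0 : 'I_2).
Definition idx_b (n : nat) : 'I_(2 + n) := lshift n (ord_max : 'I_2).

From HB Require Import structures.
From mathcomp Require Import all_boot all_order all_algebra.
From mathcomp Require Import Rstruct complex.
From mathcomp Require Import mpoly.
Set Implicit Arguments. Unset Strict Implicit. Unset Printing Implicit Defensive.
Import Order.TTheory GRing.Theory Num.Theory.
Local Open Scope ring_scope.

(* The i-th disjunct is encoded by the factor
     q_i(a, b, x) = (1 - a U_i(x)) + sum_j t_ij(x) b^j,   U_i = prod_k u_ik,
   which, as a polynomial in b, vanishes identically iff all t_ij(x) = 0 and
   a U_i(x) = 1; such an a exists iff U_i(x) != 0.  Over the infinite field C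
   a product of polynomials in b vanishes identically iff one factor does, so
   (exists a)(forall b) prod_i q_i = 0 holds iff some disjunct holds at x. *)

Section DegreeInVariable.
Variables (R : comNzRingType) (m : nat) (i : 'I_m).
Implicit Types (p q : {mpoly R[m]}) (k : nat).

Lemma mdegin_leP k q :
  reflect (forall mm, mm \in msupp q -> (mm i <= k)%N) (mdegin q i <= k)%N.
Proof.
by apply: (iffP (bigmax_leqP_seq _ _ _ _)) => h mm /h //; apply.
Qed.

Lemma mdegin_ge mm q : mm \in msupp q -> (mm i <= mdegin q i)%N.
Proof. by move=> qmm; apply: leq_bigmax_seq. Qed.

Lemma mdegin0 : @mdegin R m 0 i = 0%N.
Proof. by rewrite /mdegin msupp0 big_nil. Qed.

Lemma mdeginC c : @mdegin R m c%:MP i = 0%N.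
Proof.
apply/eqP; rewrite -leqn0; apply/mdegin_leP => mm.
by rewrite msuppC; case: (c == 0) => //; rewrite inE => /eqP ->; rewrite mnm0E.
Qed.

Lemma mdegin1 : @mdegin R m 1 i = 0%N.
Proof. exact: mdeginC. Qed.

Lemma mdeginX j : @mdegin R m 'X_j i = (i == j).
Proof. by rewrite /mdegin msuppX big_seq1 mnm1E eq_sym. Qed.

Lemma mdeginD p q : (mdegin (p + q) i <= maxn (mdegin p i) (mdegin q i))%N.
Proof.
apply/mdegin_leP => mm /msuppD_le; rewrite mem_cat leq_max.
by case/orP => /mdegin_ge ->; rewrite ?orbT.
Qed.

Lemma mdeginB p q : (mdegin (p - q) i <= maxn (mdegin p i) (mdegin q i))%N.
Proof.
apply/mdegin_leP => mm /msuppB_le; rewrite mem_cat leq_max.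
by case/orP => /mdegin_ge ->; rewrite ?orbT.
Qed.

Lemma mdeginZ c p : (mdegin (c *: p) i <= mdegin p i)%N.
Proof. by apply/mdegin_leP => mm /msuppZ_le /mdegin_ge. Qed.

Lemma mdeginM p q : (mdegin (p * q) i <= mdegin p i + mdegin q i)%N.
Proof.
apply/mdegin_leP => mm /msuppM_le /allpairsP [[m1 m2] /= [p_m1 q_m2 ->]].
by rewrite mnmDE leq_add // mdegin_ge.
Qed.

Lemma mdeginXn q l : (mdegin (q ^+ l) i <= mdegin q i * l)%N.
Proof.
elim: l => [|l IHl]; first by rewrite expr0 mdegin1.
by rewrite exprS mulnS (leq_trans (mdeginM _ _)) ?leq_add2l.
Qed.

Lemma mdegin_sum (T : Type) (r : seq T) (P : pred T) (F : T -> {mpoly R[m]}) :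
  (mdegin (\sum_(t <- r | P t) F t) i <= \max_(t <- r | P t) mdegin (F t) i)%N.
Proof.
apply: (big_ind2 (fun q k => mdegin q i <= k)%N) => //; first by rewrite mdegin0.
move=> p1 k1 p2 k2 le1 le2; apply: leq_trans (mdeginD _ _) _.
by rewrite geq_max !leq_max le1 le2 orbT.
Qed.

Lemma mdegin_prod (T : Type) (r : seq T) (P : pred T) (F : T -> {mpoly R[m]}) :
  (mdegin (\prod_(t <- r | P t) F t) i <= \sum_(t <- r | P t) mdegin (F t) i)%N.
Proof.
apply: (big_ind2 (fun q k => mdegin q i <= k)%N) => //; first by rewrite mdegin1.
by move=> p1 k1 p2 k2 le1 le2; apply: leq_trans (mdeginM _ _) (leq_add le1 le2).
Qed.

End DegreeInVariable.

Lemma mdegin_comp (R : comNzRingType) (n k : nat) (i : 'I_k)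
    (q : {mpoly R[n]}) (lq : n.-tuple {mpoly R[k]}) :
  (forall j, mdegin (tnth lq j) i = 0%N) -> mdegin (q \mPo lq) i = 0%N.
Proof.
move=> lq0; apply/eqP; rewrite -leqn0 comp_mpolyE.
apply: leq_trans (mdegin_sum _ _ _ _) _; apply/bigmax_leqP_seq => mm _ _.
apply: leq_trans (mdeginZ _ _ _) _; apply: leq_trans (mdegin_prod _ _ _ _) _.
rewrite leqn0 sum_nat_eq0; apply/forallP => j; apply/implyP => _.
by rewrite -leqn0 (leq_trans (mdeginXn _ _ _)) // lq0.
Qed.

Section LiftMpoly.
Variables (R : comNzRingType) (m n : nat).

Definition lift_mpoly (q : {mpoly R[n]}) : {mpoly R[m + n]} :=
  q \mPo [tuple 'X_(rshift m j) | j < n].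

Lemma mdegin_lift_mpoly q (i : 'I_(m + n)) :
  (i < m)%N -> mdegin (lift_mpoly q) i = 0%N.
Proof.
move=> lt_im; apply: mdegin_comp => j; rewrite tnth_mktuple mdeginX.
suff /negbTE -> : i != rshift m j by [].
by apply/eqP => i_j; move: lt_im; rewrite i_j /= ltnNge leq_addr.
Qed.

Lemma meval_lift_mpoly q (v : 'I_(m + n) -> R) :
  (lift_mpoly q).@[v] = q.@[fun j => v (rshift m j)].
Proof.
by rewrite comp_mpoly_meval; apply: meval_eq => j; rewrite tnth_mktuple mevalXU.
Qed.

End LiftMpoly.

Section EvaluationPoint.
Variables (n : nat) (a b : C) (x : 'I_n -> C).

Lemma pt_abx_a : pt_abx a b x (idx_a n) = a.
Proof. by rewrite /pt_abx /idx_a (unsplitK (inl _ _)). Qed.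

Lemma pt_abx_b : pt_abx a b x (idx_b n) = b.
Proof. by rewrite /pt_abx /idx_b (unsplitK (inl _ _)). Qed.

Lemma pt_abx_x j : pt_abx a b x (rshift 2 j) = x j.
Proof. by rewrite /pt_abx (unsplitK (inr _ _)). Qed.

End EvaluationPoint.

Lemma idx_a_neq_b n : idx_a n != idx_b n.
Proof. by rewrite /idx_a /idx_b eq_lshift. Qed.

Lemma poly_eq0_horner (R : numDomainType) (q : {poly R}) :
  (forall z, q.[z] = 0) -> q = 0.
Proof.
move=> q0; apply: (@roots_geq_poly_eq0 _ q [seq k%:R | k <- iota 0 (size q)]).
- by apply/allP => z /mapP [k _ ->]; apply/rootP.
- by rewrite map_inj_uniq ?iota_uniq // => k l /eqP; rewrite eqr_nat => /eqP.
- by rewrite size_map size_iota.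
Qed.

Section ClausePoly.
Variables (R : fieldType) (e : nat) (a U : R) (T : 'I_e -> R).

Definition clause_poly : {poly R} :=
  (1 - a * U)%:P + \sum_(j < e) T j *: 'X^(j.+1).

Lemma coef0_clause_poly : clause_poly`_0 = 1 - a * U.
Proof.
rewrite coefD coefC coef_sum big1 ?addr0 // => j _.
by rewrite coefZ coefXn mulr0.
Qed.

Lemma coefS_clause_poly (j : 'I_e) : clause_poly`_j.+1 = T j.
Proof.
rewrite coefD coefC add0r coef_sum (bigD1 j) //= big1 => [|l ne_lj].
  by rewrite coefZ coefXn eqxx mulr1 addr0.
by rewrite coefZ coefXn eqSS (inj_eq val_inj) eq_sym (negbTE ne_lj) mulr0.
Qed.

Lemma clause_poly_eq0 : clause_poly = 0 <-> a * U = 1 /\ forall j, T j = 0.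
Proof.
split=> [q0 | [aU1 T0]].
  split=> [|j]; last by rewrite -coefS_clause_poly q0 coef0.
  by apply/eqP; rewrite eq_sym -subr_eq0 -coef0_clause_poly q0 coef0.
rewrite /clause_poly aU1 subrr add0r big1 // => j _.
by rewrite T0 scale0r.
Qed.

End ClausePoly.

Lemma exists_clause_poly_eq0 (R : fieldType) (e : nat) (U : R) (T : 'I_e -> R) :
  (exists a, clause_poly a U T = 0) <-> U != 0 /\ forall j, T j = 0.
Proof.
split=> [[a /clause_poly_eq0 [aU1 T0]] | [U0 T0]].
  by split=> //; apply: contra_eq_neq aU1 => ->; rewrite mulr0 eq_sym oner_neq0.
by exists U^-1; apply/clause_poly_eq0; rewrite mulVf.
Qed.

Section ClauseMpoly.
Variables (n e f : nat) (t : 'I_e -> {mpoly C[n]}) (u : 'I_f -> {mpoly C[n]}).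

Definition clause_mpoly : {mpoly C[2 + n]} :=
  1 - 'X_(idx_a n) * lift_mpoly 2 (\prod_(k < f) u k)
  + \sum_(j < e) lift_mpoly 2 (t j) * 'X_(idx_b n) ^+ j.+1.

Lemma mdegin_clause_mpoly_a : (mdegin clause_mpoly (idx_a n) <= 1)%N.
Proof.
apply: leq_trans (mdeginD _ _ _) _; rewrite geq_max; apply/andP; split.
  apply: leq_trans (mdeginB _ _ _) _; rewrite geq_max mdegin1 /=.
  apply: leq_trans (mdeginM _ _ _) _.
  by rewrite mdeginX eqxx mdegin_lift_mpoly.
apply: leq_trans (mdegin_sum _ _ _ _) _; apply/bigmax_leqP_seq => j _ _.
apply: leq_trans (mdeginM _ _ _) _; rewrite mdegin_lift_mpoly //.
by apply: leq_trans (mdeginXn _ _ _) _; rewrite mdeginX (negbTE (idx_a_neq_b n)).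
Qed.

Lemma mdegin_clause_mpoly_b : (mdegin clause_mpoly (idx_b n) <= e)%N.
Proof.
apply: leq_trans (mdeginD _ _ _) _; rewrite geq_max; apply/andP; split.
  apply: leq_trans (mdeginB _ _ _) _; rewrite geq_max mdegin1 /=.
  apply: leq_trans (mdeginM _ _ _) _.
  by rewrite mdeginX eq_sym (negbTE (idx_a_neq_b n)) mdegin_lift_mpoly.
apply: leq_trans (mdegin_sum _ _ _ _) _; apply/bigmax_leqP_seq => j _ _.
apply: leq_trans (mdeginM _ _ _) _; rewrite mdegin_lift_mpoly //.
by apply: leq_trans (mdeginXn _ _ _) _; rewrite mdeginX eqxx mul1n.
Qed.

Lemma meval_clause_mpoly a b x :
  clause_mpoly.@[pt_abx a b x] =
  (clause_poly a (\prod_(k < f) (u k).@[x]) (fun j => (t j).@[x])).[b].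
Proof.
have lift_x q : (lift_mpoly 2 q).@[pt_abx a b x] = q.@[x].
  by rewrite meval_lift_mpoly; apply: meval_eq => j; rewrite pt_abx_x.
rewrite /clause_mpoly /clause_poly hornerD hornerC horner_sum.
rewrite rmorphD rmorphB rmorph1 rmorphM /= mevalXU pt_abx_a lift_x rmorph_prod.
rewrite rmorph_sum; congr (_ + _); apply: eq_bigr => j _.
by rewrite rmorphM rmorphXn /= mevalXU pt_abx_b lift_x hornerZ hornerXn.
Qed.

End ClauseMpoly.

Theorem theorem4p1 (n d : nat) (e_ f_ : 'I_d -> nat)
    (t : forall i : 'I_d, 'I_(e_ i) -> {mpoly C[n]})
    (u : forall i : 'I_d, 'I_(f_ i) -> {mpoly C[n]}) :
  exists p : {mpoly C[2 + n]},
    (mdegin p (idx_a n) <= d)%N /\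
    (mdegin p (idx_b n) <= \sum_(i < d) e_ i)%N /\
    forall x : 'I_n -> C,
      (exists i : 'I_d,
          (forall j : 'I_(e_ i), (t i j).@[x] = 0) /\
          (forall k : 'I_(f_ i), (u i k).@[x] != 0))
      <-> (exists a : C, forall b : C, p.@[pt_abx a b x] = 0).
Proof.
exists (\prod_(i < d) clause_mpoly (t i) (u i)); split; [|split].
- apply: leq_trans (mdegin_prod _ _ _ _) _.
  rewrite -[leqRHS]card_ord -sum1_card.
  by apply: leq_sum => i _; apply: mdegin_clause_mpoly_a.
- apply: leq_trans (mdegin_prod _ _ _ _) _.
  by apply: leq_sum => i _; apply: mdegin_clause_mpoly_b.
move=> x.
pose q i a := clause_poly a (\prod_k (u i k).@[x]) (fun j => (t i j).@[x]).
have evalE a b :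
    (\prod_i clause_mpoly (t i) (u i)).@[pt_abx a b x] = (\prod_i q i a).[b].
  by rewrite rmorph_prod horner_prod; apply: eq_bigr => i _; apply: meval_clause_mpoly.
have clauseE i : (forall j, (t i j).@[x] = 0) /\ (forall k, (u i k).@[x] != 0)
                 <-> exists a, q i a = 0.
  rewrite exists_clause_poly_eq0; split=> [[t0 u0] | [U0 t0]]; split=> //.
    by apply/prodf_neq0 => k _; apply: u0.
  by move=> k; apply: (elimT (prodf_neq0 _ _) U0).
split=> [[i /clauseE [a qa0]] | [a pa0]].
  by exists a => b; rewrite evalE (bigD1 i) //= qa0 mul0r horner0.
have /eqP /prodf_eq0 [i _ /eqP qi0] : \prod_i q i a = 0.
  by apply: poly_eq0_horner => b; rewrite -evalE.
by exists i; apply/clauseE; exists a.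
Qed.
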